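(* Let $G=(V,E)$ be a finite cavity-monotone network. As a function of $t\in(0,\infty)$, the energy $U(G;t)$ is non-decreasing, tends to $0$ as $t\to0$ and to $M(G)$ as $t\to\infty$. More precisely, $$\forall t>0,\quad U(G;t)\le t\sum_{ij\in E}A(\mu_i)A(\mu_j),$$ $$\forall t>1,\quad U(G;t)\ge M(G)-\frac{1}{\log t}\Big(|E|\log 2+\sum_{i\in V}\log A(\mu_i)\Big),$$ where for a measure $\mu$, $A(\mu)=\max\mu/\min\mu$ with $\max\mu=\max\{\mu(F):\mu(F)>0\}$ and $\min\mu=\min\{\mu(F):\mu(F)>0\}$.
   Context: Measures over subsets: for a finite set $E$, a measure is $\mu:2^E\to[0,\infty)$. For $\mathbf w\in(0,\infty)^E$, $\mathbb P^{\mathbf w}_\mu(\mathcal F=F)=\mu(F)\prod_{e\in F}w_e/\sum_{F'}\mu(F')\prod_{e\in F'}w_e$. $\mu$ is Rayleigh if for all $\mathbf w\in(0,\infty)^E$, $e\neq f$: $\mathbb P^{\mathbf w}_\mu(e,f\in\mathcal F)\le\mathbb P^{\mathbf w}_\mu(e\in\mathcal F)\mathbb P^{\mathbf w}_\mu(f\in\mathcal F)$; size-increasing if for all $\mathbf w\in(0,\infty)^E$, $e\in E$: $\mathbb E^{\mathbf w}_\mu[|\mathcal F|\mathbf 1_{e\in\mathcal F}]>\mathbb E^{\mathbf w}_\mu|\mathcal F|\,\mathbb P^{\mathbf w}_\mu(e\in\mathcal F)$; cavity-monotone if $\mu(\emptyset)>0$, Rayleigh and size-increasing. Networks: a finite network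 is a finite simple graph $G=(V,E)$ with, for each $i\in V$, a local measure $\mu_i$ over the subsets of $E_i$ (edges incident to $i$); cavity-monotone if every $\mu_i$ is. Global measure $\mu(F)=\prod_{i}\mu_i(F\cap E_i)$; $Z(G;t)=\sum_{F\subseteq E}\mu(F)t^{|F|}$; Gibbs–Boltzmann law $\mathbb P^t_G(\mathcal F=F)=\mu(F)t^{|F|}/Z(G;t)$; energy $U(G;t)=\mathbb E^t_G|\mathcal F|$; $M(G)=\max\{|F|:\mu(F)>0\}$. *)

From HB Require Import structures.
From mathcomp Require Import all_boot.
From Stdlib Require Import Reals.
Set Implicit Arguments. Unset Strict Implicit. Unset Printing Implicit Defensive.

Local Open Scope R_scope.


Definition posb (x : R) : bool := if Rlt_dec 0 x then true else false.

Section Measures.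
Variable T : finType.
(* A measure over the subsets of the finite ground set S : {set T}:
   mu : 2^S -> [0,oo) (values of mu outside 2^S are irrelevant). *)
Definition is_measure (S : {set T}) (mu : {set T} -> R) : Prop :=
  forall F : {set T}, F \subset S -> 0 <= mu F.

Definition wweight (mu : {set T} -> R) (w : T -> R) (F : {set T}) : R :=
  mu F * \big[Rmult/1]_(e in F) w e.

Definition wZ (S : {set T}) mu w : R := \big[Rplus/0]_(F : {set T} | F \subset S) wweight mu w F.

Definition wProb (S : {set T}) mu w (P : pred {set T}) : R :=
  (\big[Rplus/0]_(F : {set T} | (F \subset S) && P F) wweight mu w F) / wZ S mu w.

Definition wExp (S : {set T}) mu w (f : {set T} -> R) : R :=
  (\big[Rplus/0]_(F : {set T} | F \subset S) (f F * wweight mu w F)) / wZ S mu w.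

Definition pos_weights (S : {set T}) (w : T -> R) : Prop :=
  forall e, e \in S -> 0 < w e.

Definition Rayleigh (S : {set T}) mu : Prop :=
  forall w, pos_weights S w ->
  forall e f, e \in S -> f \in S -> e <> f ->
    wProb S mu w (fun F => (e \in F) && (f \in F))
      <= wProb S mu w (fun F => e \in F) * wProb S mu w (fun F => f \in F).

Definition size_increasing (S : {set T}) mu : Prop :=
  forall w, pos_weights S w ->
  forall e, e \in S ->
    wExp S mu w (fun F => INR #|F| * (if e \in F then 1 else 0))
      > wExp S mu w (fun F => INR #|F|) * wProb S mu w (fun F => e \in F).

Definition cavity_monotone (S : {set T}) mu : Prop :=
  0 < mu set0 /\ Rayleigh S mu /\ size_increasing S mu.

Definition pos_values (S : {set T}) mu : seq R :=
  [seq mu F | F <- enum [pred F : {set T} | F \subset S] & posb (mu F)].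
Definition max_mu (S : {set T}) mu : R :=
  let l := pos_values S mu in foldr Rmax (head 0 l) l.
Definition min_mu (S : {set T}) mu : R :=
  let l := pos_values S mu in foldr Rmin (head 0 l) l.
Definition Aratio (S : {set T}) mu : R := max_mu S mu / min_mu S mu.
End Measures.

Section Networks.
Variable V : finType.
Definition simple_graph (E : {set {set V}}) : Prop :=
  forall f, f \in E -> #|f| = 2%nat.

Definition Einc (E : {set {set V}}) (i : V) : {set {set V}} := [set f in E | i \in f].

Definition network_measures (E : {set {set V}}) (mu : V -> {set {set V}} -> R) : Prop :=
  forall i, is_measure (Einc E i) (mu i).

Definition cavity_monotone_network (E : {set {set V}}) (mu : V -> {set {set V}} -> R) : Prop :=
  forall i, cavity_monotone (Einc E i) (mu i).

Definition global_mu (E : {set {set V}}) mu (F : {set {set V}}) : R :=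
  \big[Rmult/1]_(i : V) mu i (F :&: Einc E i).

Definition Zpart (E : {set {set V}}) mu (t : R) : R :=
  \big[Rplus/0]_(F : {set {set V}} | F \subset E) (global_mu E mu F * t ^ #|F|).

Definition energy (E : {set {set V}}) mu (t : R) : R :=
  (\big[Rplus/0]_(F : {set {set V}} | F \subset E) (INR #|F| * global_mu E mu F * t ^ #|F|)) / Zpart E mu t.

Definition Mmax (E : {set {set V}}) mu : nat :=
  \max_(F : {set {set V}} | (F \subset E) && posb (global_mu E mu F)) #|F|.
End Networks.

From HB Require Import structures.
From mathcomp Require Import all_boot.
From Stdlib Require Import Reals Lra Psatz.
Set Implicit Arguments. Unset Strict Implicit. Unset Printing Implicit Defensive.
Local Open Scope R_scope.

(* The energy is the mean of |F| under the weights mu(F) t^|F|, i.e. the derivative of ln Z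
   with respect to ln t.  It is therefore nondecreasing (Chebyshev's sum inequality), and
   Gibbs' inequality gives ln Z(t) - U(t) ln t <= ln Z(1); together with
   Z(t) >= mu(F) t^M(G) for a largest support set F and Z(1) <= 2^|E| prod_i max mu_i this
   is the lower bound.  For the upper bound, the support of a Rayleigh measure charging the
   empty set is closed under taking subsets (test the Rayleigh inequality with weights
   concentrated on a support set), so adding an edge e to F multiplies mu(F) by at most
   prod_(i in e) A(mu_i); counting the pairs (F, e) with e in F then bounds U(t) by
   t sum_e prod_(i in e) A(mu_i). *)

Lemma Rplus_associative : associative Rplus. Proof. by move=> *; rewrite Rplus_assoc. Qed.
Lemma Rmult_associative : associative Rmult. Proof. by move=> *; rewrite Rmult_assoc. Qed.
HB.instance Definition _ :=
  Monoid.isComLaw.Build R 0 Rplus Rplus_associative Rplus_comm Rplus_0_l.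
HB.instance Definition _ :=
  Monoid.isComLaw.Build R 1 Rmult Rmult_associative Rmult_comm Rmult_1_l.
HB.instance Definition _ := Monoid.isMulLaw.Build R 0 Rmult Rmult_0_l Rmult_0_r.
HB.instance Definition _ :=
  Monoid.isAddLaw.Build R Rmult Rplus Rmult_plus_distr_r Rmult_plus_distr_l.

Lemma posbP x : reflect (0 < x) (posb x).
Proof. by rewrite /posb; case: Rlt_dec => h; constructor. Qed.

Section BigR.
Variable I : finType.
Implicit Types (P Q : pred I) (F G : I -> R).

Lemma sumR_ge0 P F : (forall i, P i -> 0 <= F i) -> 0 <= \big[Rplus/0]_(i | P i) F i.
Proof. by move=> H; apply: (big_ind (fun x => 0 <= x)) => // *; lra. Qed.

Lemma ler_sumR P F G : (forall i, P i -> F i <= G i) ->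
  \big[Rplus/0]_(i | P i) F i <= \big[Rplus/0]_(i | P i) G i.
Proof. by move=> H; apply: (big_ind2 (fun x y => x <= y)) => // *; lra. Qed.

Lemma sumR_ge_term P F j : P j -> (forall i, P i -> 0 <= F i) ->
  F j <= \big[Rplus/0]_(i | P i) F i.
Proof.
move=> Pj F_ge0; rewrite (bigD1 j) //=.
have : 0 <= \big[Rplus/0]_(i | P i && (i != j)) F i.
  by apply: sumR_ge0 => i /andP[Pi _]; apply: F_ge0.
lra.
Qed.

Lemma sumR_sub P F G : \big[Rplus/0]_(i | P i) (F i - G i)
  = \big[Rplus/0]_(i | P i) F i - \big[Rplus/0]_(i | P i) G i.
Proof.
rewrite /Rminus big_split /= (big_morph Ropp (id1 := 0) (op1 := Rplus)) //; move=> *; lra.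
Qed.

Lemma ler_sumR_subset P Q F G : (forall i, P i -> Q i) -> (forall i, P i -> F i <= G i) ->
  (forall i, Q i -> 0 <= G i) ->
  \big[Rplus/0]_(i | P i) F i <= \big[Rplus/0]_(i | Q i) G i.
Proof.
move=> PQ FG G_ge0; rewrite (big_mkcond P) (big_mkcond Q); apply: ler_sumR => i _ /=.
by case: ifP => [/[dup] /PQ -> /FG // | _]; case: ifP => [/G_ge0 | _]; lra.
Qed.

Lemma INR_card P : INR #|P| = \big[Rplus/0]_(i | P i) 1.
Proof.
rewrite cardE /enum_mem -big_filter /=.
elim: (filter _ _) => [|x s IH]; first by rewrite big_nil.
by rewrite big_cons -IH -/(INR (size s).+1) S_INR Rplus_comm.
Qed.

Lemma prodR_ge0 P F : (forall i, P i -> 0 <= F i) -> 0 <= \big[Rmult/1]_(i | P i) F i.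
Proof. by move=> H; apply: (big_ind (fun x => 0 <= x)) => // *; [lra | apply: Rmult_le_pos]. Qed.

Lemma prodR_gt0 P F : (forall i, P i -> 0 < F i) -> 0 < \big[Rmult/1]_(i | P i) F i.
Proof.
by move=> H; apply: (big_ind (fun x => 0 < x)) => // *; [lra | apply: Rmult_lt_0_compat].
Qed.

Lemma ler_prodR P F G : (forall i, P i -> 0 <= F i <= G i) ->
  \big[Rmult/1]_(i | P i) F i <= \big[Rmult/1]_(i | P i) G i.
Proof.
move=> H; suff [] : 0 <= \big[Rmult/1]_(i | P i) F i <= \big[Rmult/1]_(i | P i) G i by [].
apply: (big_ind2 (fun x y => 0 <= x <= y)) => //; first lra.
move=> x1 x2 y1 y2 [? ?] [? ?]; split; first exact: Rmult_le_pos.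
by apply: Rmult_le_compat; lra.
Qed.

Lemma prodR_const P c : \big[Rmult/1]_(i | P i) c = c ^ #|P|.
Proof.
rewrite cardE /enum_mem -big_filter /=.
by elim: (filter _ _) => [|x s IH]; rewrite ?big_nil // big_cons IH.
Qed.

Lemma ln_prodR P F : (forall i, P i -> 0 < F i) ->
  ln (\big[Rmult/1]_(i | P i) F i) = \big[Rplus/0]_(i | P i) ln (F i).
Proof.
move=> H; suff [] : 0 < \big[Rmult/1]_(i | P i) F i /\
  ln (\big[Rmult/1]_(i | P i) F i) = \big[Rplus/0]_(i | P i) ln (F i) by [].
apply: (big_ind2 (fun x y => 0 < x /\ ln x = y)) => [|x1 x2 y1 y2 [? <-] [? <-]|i Pi].
- by split; [lra | exact: ln_1].
- by split; [exact: Rmult_lt_0_compat | rewrite ln_mult].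
- by split; [exact: H |].
Qed.

End BigR.

Lemma prodR_gt0_factor (I : finType) (F : I -> R) j : (forall i, 0 <= F i) ->
  0 < \big[Rmult/1]_(i : I) F i -> 0 < F j.
Proof.
move=> F_ge0; case: (Rlt_dec 0 (F j)) => // Fj.
have Fj0 : F j = 0 by have := F_ge0 j; lra.
by rewrite (bigD1 j) //= Fj0 Rmult_0_l; lra.
Qed.

Lemma bigmax_support_attained (I : finType) (P : pred I) (g : I -> R) (k : I -> nat) i0 :
  P i0 -> 0 < g i0 ->
  exists2 i, P i /\ 0 < g i & k i = \max_(j | P j && posb (g j)) k j.
Proof.
move=> P_i0 g_i0; have Pg_i0 : P i0 && posb (g i0) by rewrite P_i0; apply/posbP.
rewrite (bigmax_eq_arg i0 Pg_i0); case: arg_maxnP => // i /andP[Pi /posbP gi] _.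
by exists i.
Qed.

Lemma pow_cross_ge0 s t (k m : nat) : 0 < s -> s <= t ->
  0 <= (INR k - INR m) * (t ^ k * s ^ m - s ^ k * t ^ m).
Proof.
move=> s_gt0 st.
wlog mk : k m / leq m k.
  move=> H; case: (leqP m k) => [/H //|/ltnW/H]; nra.
have [d ->] : exists d, k = addn m d by exists (subn k m); rewrite subnKC.
rewrite !pow_add plus_INR.
have sm : 0 < s ^ m by apply: pow_lt.
have tm : 0 < t ^ m by apply: pow_lt; lra.
have -> : (INR m + INR d - INR m) * (t ^ m * t ^ d * s ^ m - s ^ m * s ^ d * t ^ m)
  = INR d * (s ^ m * t ^ m) * (t ^ d - s ^ d) by ring.
apply: Rmult_le_pos; first by apply: Rmult_le_pos; [exact: pos_INR | nra].
have : s ^ d <= t ^ d by apply: pow_incr; lra.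
lra.
Qed.

Lemma ln_le x y : 0 < x -> x <= y -> ln x <= ln y.
Proof. by move=> x_gt0 [xy | <-]; [apply/Rlt_le/ln_increasing | apply: Rle_refl]. Qed.

Lemma ln_ge_1_sub_inv x : 0 < x -> 1 - / x <= ln x.
Proof.
move=> x_gt0; have := exp_ineq1_le (ln (/ x)).
by rewrite exp_ln ?ln_Rinv //; [lra | apply: Rinv_0_lt_compat].
Qed.

(* [1 - 1/y <= ln y] at [y = a x^n / b], scaled by [c x^n]. *)
Lemma tilted_ln_ge c x a b (n : nat) : 0 <= c -> 0 < x -> 0 < a -> 0 < b ->
  c * x ^ n - b / a * c <= c * x ^ n * (ln a + INR n * ln x - ln b).
Proof.
move=> c_ge0 x_gt0 a_gt0 b_gt0; have xn : 0 < x ^ n by apply: pow_lt.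
have y_gt0 : 0 < a * x ^ n / b by apply: Rdiv_lt_0_compat => //; apply: Rmult_lt_0_compat.
have := ln_ge_1_sub_inv y_gt0.
rewrite /Rdiv ln_mult ?ln_mult ?ln_Rinv ?ln_pow //; try exact: Rmult_lt_0_compat.
  move=> H; have := Rmult_le_compat_l _ _ _ (Rmult_le_pos _ _ c_ge0 (Rlt_le _ _ xn)) H.
  have -> : c * x ^ n * (1 - / (a * x ^ n * / b)) = c * x ^ n - b * / a * c by field; lra.
  lra.
exact: Rinv_0_lt_compat.
Qed.

Lemma Rdiv_le_cross a b c d : 0 < b -> 0 < d -> a * d <= c * b -> a / b <= c / d.
Proof.
move=> b_gt0 d_gt0 H; apply: (Rmult_le_reg_r (b * d)); first exact: Rmult_lt_0_compat.
have -> : a / b * (b * d) = a * d by field; lra.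
by have -> : c / d * (b * d) = c * b by field; lra.
Qed.

Lemma INR_expn m n : INR (expn m n) = INR m ^ n.
Proof. by elim: n => [//|n IH]; rewrite expnS mult_INR IH. Qed.

Lemma lim0_of_linear_bound (f : R -> R) C : (forall t, 0 < t -> 0 <= f t <= t * C) ->
  forall eps, 0 < eps -> exists d, 0 < d /\ forall t, 0 < t -> t < d -> Rabs (f t) < eps.
Proof.
move=> f_bnd eps eps_gt0; have C1 : 0 < Rabs C + 1 by have := Rabs_pos C; lra.
exists (eps / (Rabs C + 1)); split; first exact: Rdiv_lt_0_compat.
move=> t t_gt0 t_lt; have [f_ge0 f_le] := f_bnd t t_gt0.
have tC : t * C <= t * (Rabs C + 1) by apply: Rmult_le_compat_l; [lra | have := Rle_abs C; lra].
have t_eps : t * (Rabs C + 1) < eps.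
  by have := Rmult_lt_compat_r _ _ _ C1 t_lt; rewrite /Rdiv Rmult_assoc Rinv_l; lra.
by rewrite Rabs_right; lra.
Qed.

Lemma lim_of_log_bound (f : R -> R) M C : (forall t, 1 < t -> M - / ln t * C <= f t <= M) ->
  forall eps, 0 < eps -> exists T0, forall t, T0 < t -> Rabs (f t - M) < eps.
Proof.
move=> f_bnd eps eps_gt0; have Ce : 0 <= Rabs C / eps.
  by apply: Rmult_le_pos; [exact: Rabs_pos | exact/Rlt_le/Rinv_0_lt_compat].
exists (exp (Rabs C / eps + 1)) => t t_gt.
have T0_gt1 : 1 < exp (Rabs C / eps + 1).
  by rewrite -[X in X < _]exp_0; apply: exp_increasing; lra.
have lnt : Rabs C / eps + 1 < ln t.
  by rewrite -[X in X < _]ln_exp; apply: ln_increasing => //; exact: exp_pos.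
have [f_ge f_le] := f_bnd t ltac:(lra).
have C_eps : / ln t * C < eps.
  apply: (Rmult_lt_reg_l (ln t)); first lra.
  rewrite -Rmult_assoc Rinv_r; last lra.
  have := Rle_abs C; have : Rabs C < eps * (Rabs C / eps + 1).
    by rewrite Rmult_plus_distr_l /Rdiv Rmult_comm Rmult_assoc Rinv_l; lra.
  by have := Rmult_lt_compat_l _ _ _ eps_gt0 lnt; lra.
by rewrite Rabs_left1; lra.
Qed.

Section PowerSum.
Variables (I : finType) (P : pred I) (g : I -> R) (k : I -> nat).
Hypothesis g_ge0 : forall i, P i -> 0 <= g i.
Variable i0 : I.
Hypotheses (P_i0 : P i0) (g_i0 : 0 < g i0).

Local Notation Z t := (\big[Rplus/0]_(i | P i) (g i * t ^ k i)).
Local Notation N t := (\big[Rplus/0]_(i | P i) (INR (k i) * g i * t ^ k i)).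

Lemma power_sum_gt0 t : 0 < t -> 0 < Z t.
Proof.
move=> t_gt0; apply: Rlt_le_trans (sumR_ge_term (F := fun i => g i * t ^ k i) P_i0 _).
  by apply: Rmult_lt_0_compat => //; apply: pow_lt.
by move=> i Pi; apply: Rmult_le_pos; [exact: g_ge0 | apply: pow_le; lra].
Qed.

Lemma power_mean_ge0 t : 0 < t -> 0 <= N t / Z t.
Proof.
move=> t_gt0; apply: Rmult_le_pos; last exact/Rlt_le/Rinv_0_lt_compat/power_sum_gt0.
apply: sumR_ge0 => i Pi; apply: Rmult_le_pos; last by apply: pow_le; lra.
by apply: Rmult_le_pos; [exact: pos_INR | exact: g_ge0].
Qed.

Lemma power_mean_le m t : 0 < t -> (forall i, P i -> 0 < g i -> (k i <= m)%nat) ->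
  N t / Z t <= INR m.
Proof.
move=> t_gt0 k_le; have Z_gt0 := power_sum_gt0 t_gt0.
rewrite -[INR m]Rdiv_1_r; apply: (Rdiv_le_cross Z_gt0 Rlt_0_1).
rewrite Rmult_1_r big_distrr; apply: ler_sumR => i Pi /=.
have tk : 0 <= t ^ k i by apply: pow_le; lra.
case: (Rle_lt_or_eq_dec 0 (g i) (g_ge0 Pi)) => [gi | <-]; last lra.
rewrite -Rmult_assoc; apply: Rmult_le_compat_r => //.
by apply: Rmult_le_compat_r; [lra | apply/le_INR/leP/k_le].
Qed.

(* Chebyshev's sum inequality: symmetrize the double sum N t * Z s - N s * Z t. *)
Lemma power_mean_nondecreasing s t : 0 < s -> s <= t -> N s / Z s <= N t / Z t.
Proof.
move=> s_gt0 st; have Zt : 0 < Z t by apply: power_sum_gt0; lra.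
apply: (Rdiv_le_cross (power_sum_gt0 s_gt0) Zt).
pose h i j := INR (k i) * g i * g j * (t ^ k i * s ^ k j - s ^ k i * t ^ k j).
have expand : N t * Z s - N s * Z t =
    \big[Rplus/0]_(i | P i) \big[Rplus/0]_(j | P j) h i j.
  rewrite !big_distrl -sumR_sub; apply: eq_bigr => i _.
  by rewrite !big_distrr -sumR_sub; apply: eq_bigr => j _; rewrite /h /=; ring.
have swap : \big[Rplus/0]_(i | P i) \big[Rplus/0]_(j | P j) h i j =
    \big[Rplus/0]_(i | P i) \big[Rplus/0]_(j | P j) h j i by rewrite exchange_big.
have sym : 0 <= \big[Rplus/0]_(i | P i) \big[Rplus/0]_(j | P j) (h i j + h j i).
  apply: sumR_ge0 => i Pi; apply: sumR_ge0 => j Pj.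
  have -> : h i j + h j i = g i * g j *
      ((INR (k i) - INR (k j)) * (t ^ k i * s ^ k j - s ^ k i * t ^ k j)) by rewrite /h; ring.
  apply: Rmult_le_pos; first by apply: Rmult_le_pos; exact: g_ge0.
  exact: pow_cross_ge0.
move: sym; under eq_bigr do rewrite big_split; rewrite big_split /= -swap; lra.
Qed.

Lemma ln_power_sum_ge i t : P i -> 0 < g i -> 0 < t ->
  ln (g i) + INR (k i) * ln t <= ln (Z t).
Proof.
move=> Pi gi t_gt0; have tk : 0 < t ^ k i by apply: pow_lt.
rewrite -ln_pow // -ln_mult //; apply: ln_le; first exact: Rmult_lt_0_compat.
apply: (sumR_ge_term (F := fun i => g i * t ^ k i)) => // j Pj.
by apply: Rmult_le_pos; [exact: g_ge0 | apply: pow_le; lra].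
Qed.

(* Gibbs' inequality between the tilted law g t^k / Z t and the law g / Z 1. *)
Lemma ln_power_sum_le t : 0 < t -> ln (Z t) - ln t * (N t / Z t) <= ln (Z 1).
Proof.
move=> t_gt0; have Zt := power_sum_gt0 t_gt0.
have Z1 := power_sum_gt0 Rlt_0_1.
have termwise i : P i -> g i * t ^ k i - Z t / Z 1 * (g i * 1 ^ k i)
    <= g i * t ^ k i * (ln (Z 1) + INR (k i) * ln t - ln (Z t)).
  by move=> Pi; rewrite pow1 Rmult_1_r; apply: tilted_ln_ge => //; exact: g_ge0.
have := ler_sumR termwise; rewrite sumR_sub -big_distrr /=.
have -> : Z t / Z 1 * Z 1 = Z t by field; lra.
rewrite Rminus_diag.
have -> : \big[Rplus/0]_(i | P i) (g i * t ^ k i * (ln (Z 1) + INR (k i) * ln t - ln (Z t)))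
    = Z t * (ln (Z 1) - ln (Z t)) + N t * ln t.
  by rewrite !big_distrl -big_split /=; apply: eq_bigr => i _; ring.
move=> H; apply: (Rmult_le_reg_l (Z t)) => //.
have -> : Z t * (ln (Z t) - ln t * (N t / Z t)) = Z t * ln (Z t) - N t * ln t by field; lra.
lra.
Qed.

End PowerSum.

Lemma neg_correlation_cross A B C D : 0 < A + B + C + D ->
  D / (A + B + C + D) <= (B + D) / (A + B + C + D) * ((C + D) / (A + B + C + D)) ->
  A * D <= B * C.
Proof.
set Z := A + B + C + D => Z_gt0 H.
have : D * Z <= (B + D) * (C + D).
  have := Rmult_le_compat_r (Z * Z) _ _ (Rlt_le _ _ (Rmult_lt_0_compat _ _ Z_gt0 Z_gt0)) H.
  have -> : D / Z * (Z * Z) = D * Z by field; lra.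
  by have -> : (B + D) / Z * ((C + D) / Z) * (Z * Z) = (B + D) * (C + D) by field; lra.
rewrite /Z; lra.
Qed.

Section RayleighSupport.
Variables (T : finType) (S0 : {set T}) (mu : {set T} -> R).
Hypotheses (mu_ge0 : is_measure S0 mu) (mu0_gt0 : 0 < mu set0).
Implicit Types (w : T -> R) (P : pred {set T}) (F S Q U : {set T}).

Definition wsum (w : T -> R) (P : pred {set T}) : R :=
  \big[Rplus/0]_(F : {set T} | (F \subset S0) && P F) wweight mu w F.

Definition mass (P : pred {set T}) : R := \big[Rplus/0]_(F : {set T} | (F \subset S0) && P F) mu F.

Lemma mass_ge0 P : 0 <= mass P.
Proof. by apply: sumR_ge0 => F /andP[FS _]; exact: mu_ge0. Qed.

Lemma wsum_split w P a :
  wsum w P = wsum w (fun F => P F && a F) + wsum w (fun F => P F && ~~ a F).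
Proof. by rewrite /wsum (bigID a) /=; congr (_ + _); apply: eq_bigl => F; rewrite andbA. Qed.

Lemma wsum_ge_weight w P F : (forall g, 0 <= w g) -> F \subset S0 -> P F ->
  wweight mu w F <= wsum w P.
Proof.
move=> w_ge0 FS PF; apply: (sumR_ge_term (F := wweight mu w)); first by rewrite FS.
by move=> G /andP[GS _]; apply: Rmult_le_pos; [exact: mu_ge0 | exact: prodR_ge0].
Qed.

Lemma wsum_ge0 w P : (forall g, 0 <= w g) -> 0 <= wsum w P.
Proof.
by move=> w_ge0; apply: sumR_ge0 => G /andP[GS _]; apply: Rmult_le_pos;
  [exact: mu_ge0 | exact: prodR_ge0].
Qed.

Lemma Rayleigh_cross w e f : Rayleigh S0 mu -> (forall g, 0 < w g) ->
  e \in S0 -> f \in S0 -> e <> f ->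
  wsum w (fun F => (e \notin F) && (f \notin F)) * wsum w (fun F => (e \in F) && (f \in F))
  <= wsum w (fun F => (e \in F) && (f \notin F)) * wsum w (fun F => (e \notin F) && (f \in F)).
Proof.
move=> ray w_gt0 eS fS ef; have w_ge0 g := Rlt_le _ _ (w_gt0 g).
have corr := ray w (fun g _ => w_gt0 g) e f eS fS ef.
change (wsum w (fun F => (e \in F) && (f \in F)) / wZ S0 mu w
  <= wsum w (fun F => e \in F) / wZ S0 mu w * (wsum w (fun F => f \in F) / wZ S0 mu w)) in corr.
set A := wsum w (fun F => (e \notin F) && (f \notin F)).
set B := wsum w (fun F => (e \in F) && (f \notin F)).
set C := wsum w (fun F => (e \notin F) && (f \in F)).
set D := wsum w (fun F => (e \in F) && (f \in F)).
have eE : wsum w (fun F => e \in F) = B + D.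
  by rewrite (wsum_split w (fun F : {set T} => e \in F) (fun F : {set T} => f \in F)) Rplus_comm.
have eF : wsum w (fun F => f \in F) = C + D.
  rewrite (wsum_split w (fun F : {set T} => f \in F) (fun F : {set T} => e \in F)) Rplus_comm.
  by rewrite /C /D /wsum; congr (_ + _); apply: eq_bigl => F; rewrite [X in _ && X]andbC.
have eNE : wsum w (fun F => e \notin F) = A + C.
  by rewrite (wsum_split w (fun F : {set T} => e \notin F) (fun F : {set T} => f \in F)) Rplus_comm.
have eZ : wZ S0 mu w = A + B + C + D.
  by rewrite /wZ (bigID (fun F => e \in F)) /= -/(wsum w _) -/(wsum w _) eE eNE; lra.
move: corr; rewrite eZ eE eF; apply: neg_correlation_cross.
have A_gt0 : 0 < A.
  have := wsum_ge_weight (P := fun F => (e \notin F) && (f \notin F)) w_ge0 (sub0set S0).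
  by rewrite /wweight big_set0 Rmult_1_r !inE -/A => /(_ isT); lra.
have := wsum_ge0 (fun F => (e \in F) && (f \notin F)) w_ge0.
have := wsum_ge0 (fun F => (e \notin F) && (f \in F)) w_ge0.
have := wsum_ge0 (fun F => (e \in F) && (f \in F)) w_ge0.
rewrite -/B -/C -/D; lra.
Qed.

(* The factor [l^-|T|] makes any set leaving [S] weigh at most [1]. *)
Definition peak_weight (l : R) (S : {set T}) (g : T) : R :=
  if g \in S then l else / l ^ #|T|.

Lemma peak_weight_gt0 l S g : 0 < l -> 0 < peak_weight l S g.
Proof. by move=> l_gt0; rewrite /peak_weight; case: ifP => // _; apply/Rinv_0_lt_compat/pow_lt. Qed.

Lemma prod_peak_weight_sub l S F : F \subset S ->
  \big[Rmult/1]_(g in F) peak_weight l S g = l ^ #|F|.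
Proof.
move=> FS; rewrite -prodR_const; apply: eq_bigr => g gF.
by rewrite /peak_weight (subsetP FS g gF).
Qed.

Lemma prod_peak_weight_le l S F (k : nat) : 1 <= l -> (F \subset S -> (#|F| <= k)%nat) ->
  \big[Rmult/1]_(g in F) peak_weight l S g <= l ^ k.
Proof.
move=> l_ge1 Fk; case: (boolP (F \subset S)) => [FS | /subsetPn[h hF hS]].
  by rewrite prod_peak_weight_sub //; apply: Rle_pow => //; apply/leP/Fk.
apply: Rle_trans (pow_R1_Rle _ _ l_ge1).
have lT : 0 < l ^ #|T| by apply: pow_lt; lra.
have inv_lT : / l ^ #|T| <= 1.
  by rewrite -Rinv_1; apply: Rinv_le_contravar; [lra | exact: pow_R1_Rle].
rewrite (bigD1 h) //= /peak_weight (negbTE hS) -/(peak_weight l S).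
have rest : \big[Rmult/1]_(g | (g \in F) && (g != h)) peak_weight l S g <= l ^ #|T|.
  apply: Rle_trans (_ : \big[Rmult/1]_(g | (g \in F) && (g != h)) l <= _).
    apply: ler_prodR => g _; split; first by apply/Rlt_le/peak_weight_gt0; lra.
    by rewrite /peak_weight; case: ifP => _; lra.
  by rewrite prodR_const; apply: Rle_pow => //; apply/leP/max_card.
have := Rmult_le_compat_l _ _ _ (Rlt_le _ _ (Rinv_0_lt_compat _ lT)) rest.
by rewrite Rinv_l //; lra.
Qed.

Lemma wsum_peak_le l S P (k : nat) : 1 <= l ->
  (forall F, F \subset S0 -> P F -> 0 < mu F -> F \subset S -> (#|F| <= k)%nat) ->
  wsum (peak_weight l S) P <= mass P * l ^ k.
Proof.
move=> l_ge1 Fk; rewrite big_distrl; apply: ler_sumR => F /andP[FS PF] /=.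
case: (Rle_lt_or_eq_dec _ _ (mu_ge0 FS)) => [muF | muF0].
  by apply: Rmult_le_compat_l; [lra | apply: prod_peak_weight_le => //; apply: Fk].
by rewrite /wweight -muF0 !Rmult_0_l; lra.
Qed.

Section PeakBound.
Variables (S : {set T}) (e f : T) (Ta : {set T}).
Hypotheses (SS0 : S \subset S0) (eS : e \in S) (fSe : f \in S :\ e) (muSe : mu (S :\ e) = 0).
Hypothesis proper_setD1 : forall F g, F \proper S -> 0 < mu F -> g \in F -> 0 < mu (F :\ g).
Hypothesis TaR : Ta \subset S :\ e :\ f.
Hypothesis Ta_max : forall U, U \subset S :\ e :\ f -> 0 < mu U -> (#|U| <= #|Ta|)%nat.

Local Notation KB := (mass (fun F => (e \in F) && (f \notin F))).
Local Notation KC := (mass (fun F => (e \notin F) && (f \in F))).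

(* With weights peaking on [S], the four cells of the Rayleigh inequality for [e] and [f] are
   of order [l^|Ta|], [l^|S|], [l^(|Ta|+1)] and [l^(|S|-2)], since [mu (S :\ e)] vanishes. *)
Lemma peak_Rayleigh_bound l : Rayleigh S0 mu -> 1 <= l -> mu Ta * mu S * l <= KB * KC.
Proof.
move=> ray l_ge1; set R := S :\ e :\ f.
move: fSe; rewrite in_setD1 => /andP[fe fS].
have cardSe : #|S :\ e| = #|R|.+1 by rewrite (cardsD1 f (S :\ e)) in_setD1 fe fS.
have cardS : #|S| = #|R|.+2 by rewrite (cardsD1 e S) eS cardSe.
have w_gt0 g : 0 < peak_weight l S g by apply: peak_weight_gt0; lra.
have w_ge0 g := Rlt_le _ _ (w_gt0 g).
have ef : e <> f by move=> ef; rewrite ef eqxx in fe.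
have cross := Rayleigh_cross ray w_gt0 (subsetP SS0 e eS) (subsetP SS0 f fS) ef.
have TaS : Ta \subset S by move: TaR; rewrite /R !subsetD1 => /andP[/andP[]].
have A_ge : mu Ta * l ^ #|Ta| <= wsum (peak_weight l S) (fun F => (e \notin F) && (f \notin F)).
  rewrite -(prod_peak_weight_sub l TaS); apply: wsum_ge_weight => //.
    exact: subset_trans TaS SS0.
  by move: TaR; rewrite /R !subsetD1 => /andP[/andP[_ ->] ->].
have D_ge : mu S * l ^ #|R|.+2 <= wsum (peak_weight l S) (fun F => (e \in F) && (f \in F)).
  by rewrite -cardS -(prod_peak_weight_sub l (subxx S)); apply: wsum_ge_weight => //; rewrite eS.
have B_le : wsum (peak_weight l S) (fun F => (e \in F) && (f \notin F)) <= KB * l ^ #|Ta|.+1.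
  apply: wsum_peak_le => // F _ /andP[eF fF] muF FS.
  have FpS : F \proper S by rewrite properEneq FS andbT; apply: contraNneq fF => ->.
  have FeR : F :\ e \subset R.
    rewrite /R !subsetD1 !in_setD1 eqxx (negbTE fF) andbF !andbT.
    exact: subset_trans (subsetDl _ _) FS.
  by move: (Ta_max FeR (proper_setD1 FpS muF eF)); rewrite (cardsD1 e F) eF.
have C_le : wsum (peak_weight l S) (fun F => (e \notin F) && (f \in F)) <= KC * l ^ #|R|.
  apply: wsum_peak_le => // F _ /andP[eF fF] muF FS.
  have FpSe : F \proper S :\ e.
    rewrite properEneq subsetD1 FS eF /= andbT; apply/eqP => FSe.
    by move: muF; rewrite FSe muSe; lra.
  by move: (proper_card FpSe); rewrite cardSe.
have A0 : 0 <= mu Ta * l ^ #|Ta|.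
  by apply: Rmult_le_pos; [exact/mu_ge0/(subset_trans TaS) | apply: pow_le; lra].
have D0 : 0 <= mu S * l ^ #|R|.+2 by apply: Rmult_le_pos; [exact: mu_ge0 | apply: pow_le; lra].
have := Rle_trans _ _ _ (Rmult_le_compat _ _ _ _ A0 D0 A_ge D_ge) (Rle_trans _ _ _ cross
  (Rmult_le_compat _ _ _ _ (wsum_ge0 _ w_ge0) (wsum_ge0 _ w_ge0) B_le C_le)).
have lpq : 0 < l * (l ^ #|Ta| * l ^ #|R|).
  by apply: Rmult_lt_0_compat; last apply: Rmult_lt_0_compat; try apply: pow_lt; lra.
have -> : mu Ta * l ^ #|Ta| * (mu S * l ^ #|R|.+2)
  = mu Ta * mu S * l * (l * (l ^ #|Ta| * l ^ #|R|)) by rewrite /=; ring.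
have -> : KB * l ^ #|Ta|.+1 * (KC * l ^ #|R|) = KB * KC * (l * (l ^ #|Ta| * l ^ #|R|)).
  by rewrite /=; ring.
exact: Rmult_le_reg_r.
Qed.

End PeakBound.

Lemma support_setD1_step S e : Rayleigh S0 mu -> S \subset S0 -> 0 < mu S -> e \in S ->
  (forall F g, F \proper S -> 0 < mu F -> g \in F -> 0 < mu (F :\ g)) ->
  0 < mu (S :\ e).
Proof.
move=> ray SS0 muS eS IH.
case: (set_0Vmem (S :\ e)) => [-> // | [f fSe]].
case: (Rle_lt_or_eq_dec _ _ (mu_ge0 (subset_trans (subsetDl S [set e]) SS0))) => // muSe.
have [Ta [TaR muTa] aE] := bigmax_support_attained
  (P := fun U : {set T} => U \subset S :\ e :\ f) (fun U => #|U|) (sub0set _) mu0_gt0.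
have Ta_max U : U \subset S :\ e :\ f -> 0 < mu U -> (#|U| <= #|Ta|)%nat.
  move=> UR muU; rewrite aE.
  apply: (leq_bigmax_cond (P := fun U : {set T} => (U \subset S :\ e :\ f) && posb (mu U))).
  by rewrite UR; apply/posbP.
have muTaS : 0 < mu Ta * mu S by apply: Rmult_lt_0_compat.
set K := mass (fun F => (e \in F) && (f \notin F)) * mass (fun F => (e \notin F) && (f \in F)).
have K_ge0 : 0 <= K by apply: Rmult_le_pos; exact: mass_ge0.
have K_div : 0 <= K / (mu Ta * mu S).
  by apply: Rmult_le_pos => //; exact/Rlt_le/Rinv_0_lt_compat.
have := peak_Rayleigh_bound SS0 eS fSe (esym muSe) IH TaR Ta_max ray
  (l := K / (mu Ta * mu S) + 1) ltac:(lra).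
rewrite -/K; have -> : mu Ta * mu S * (K / (mu Ta * mu S) + 1) = K + mu Ta * mu S by field; lra.
lra.
Qed.

Lemma Rayleigh_support_setD1 S e : Rayleigh S0 mu -> S \subset S0 -> 0 < mu S -> e \in S ->
  0 < mu (S :\ e).
Proof.
move=> ray; have [n] := ubnP #|S|; elim: n S e => // n IH S e /ltnSE cardS SS0 muS eS.
apply: support_setD1_step => // F g FS muF gF; apply: IH => //.
  exact: leq_trans (proper_card FS) cardS.
exact: subset_trans (proper_sub FS) SS0.
Qed.

Lemma Rayleigh_support_sub S Q : Rayleigh S0 mu -> S \subset S0 -> 0 < mu S -> Q \subset S ->
  0 < mu Q.
Proof.
move=> ray; have [n] := ubnP #|S :\: Q|; elim: n S => // n IH S /ltnSE cardSQ SS0 muS QS.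
case: (set_0Vmem (S :\: Q)) => [SQ0 | [e]].
  suff -> : Q = S by [].
  by apply/eqP; rewrite eqEsubset QS -setD_eq0 SQ0 eqxx.
rewrite inE => /andP[eQ eS].
apply: (IH (S :\ e)); last by rewrite subsetD1 QS.
- have : #|S :\: Q| = #|S :\ e :\: Q|.+1.
    rewrite (cardsD1 e (S :\: Q)) inE eQ eS; congr _.+1.
    by apply: eq_card => x; rewrite !inE andbCA.
  by move=> cardE; rewrite cardE in cardSQ.
- exact: subset_trans (subsetDl _ _) SS0.
- exact: Rayleigh_support_setD1.
Qed.

End RayleighSupport.

Section FoldExtrema.
Variables (X : eqType) (f : X -> R).

Lemma foldr_Rmin_le d (s : seq X) x : x \in s -> foldr Rmin d (map f s) <= f x.
Proof.
elim: s => [//|y s IH]; rewrite inE => /orP[/eqP <- | xs] /=; first exact: Rmin_l.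
exact: Rle_trans (Rmin_r _ _) (IH xs).
Qed.

Lemma foldr_Rmax_ge d (s : seq X) x : x \in s -> f x <= foldr Rmax d (map f s).
Proof.
elim: s => [//|y s IH]; rewrite inE => /orP[/eqP <- | xs] /=; first exact: Rmax_l.
exact: Rle_trans (IH xs) (Rmax_r _ _).
Qed.

End FoldExtrema.

Lemma foldr_Rmin_gt0 d (s : seq R) : 0 < d -> all posb s -> 0 < foldr Rmin d s.
Proof.
move=> d_gt0; elim: s => [//|x s IH] /= /andP[/posbP x_gt0 /IH s_gt0].
exact: Rmin_glb_lt.
Qed.

Section SupportExtrema.
Variables (T : finType) (S0 : {set T}) (mu : {set T} -> R).
Hypothesis mu0_gt0 : 0 < mu set0.
Implicit Types F G : {set T}.

Let supp := [seq F <- enum [pred F : {set T} | F \subset S0] | posb (mu F)].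

Lemma mem_supp F : F \subset S0 -> 0 < mu F -> F \in supp.
Proof. by move=> FS muF; rewrite mem_filter mem_enum inE FS andbT; apply/posbP. Qed.

Lemma min_mu_le F : F \subset S0 -> 0 < mu F -> min_mu S0 mu <= mu F.
Proof. by move=> FS muF; apply: foldr_Rmin_le; exact: mem_supp. Qed.

Lemma max_mu_ge F : F \subset S0 -> 0 < mu F -> mu F <= max_mu S0 mu.
Proof. by move=> FS muF; apply: foldr_Rmax_ge; exact: mem_supp. Qed.

Lemma max_mu_gt0 : 0 < max_mu S0 mu.
Proof. exact: Rlt_le_trans mu0_gt0 (max_mu_ge (sub0set S0) mu0_gt0). Qed.

Lemma min_mu_gt0 : 0 < min_mu S0 mu.
Proof.
have all_pos : all posb (pos_values S0 mu).
  by rewrite all_map; apply/allP => F; rewrite mem_filter => /andP[].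
apply: foldr_Rmin_gt0 => //; move: all_pos (mem_supp (sub0set S0) mu0_gt0).
by rewrite /pos_values -/supp; case: supp => [//|F s] /= /andP[/posbP].
Qed.

Lemma Aratio_gt0 : 0 < Aratio S0 mu.
Proof. exact: Rdiv_lt_0_compat max_mu_gt0 min_mu_gt0. Qed.

Lemma ln_Aratio : ln (Aratio S0 mu) = ln (max_mu S0 mu) - ln (min_mu S0 mu).
Proof.
have M := max_mu_gt0; have m := min_mu_gt0.
by rewrite /Aratio /Rdiv ln_mult ?ln_Rinv //; exact: Rinv_0_lt_compat.
Qed.

Lemma le_Aratio_mul F G : F \subset S0 -> G \subset S0 -> 0 < mu F -> 0 < mu G ->
  mu F <= Aratio S0 mu * mu G.
Proof.
move=> FS GS muF muG; apply: Rle_trans (max_mu_ge FS muF) _.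
have := min_mu_le GS muG; have := min_mu_gt0; have := max_mu_gt0.
rewrite /Aratio => M m mG.
have e : max_mu S0 mu / min_mu S0 mu * min_mu S0 mu = max_mu S0 mu by field; lra.
by rewrite -{1}e; apply: Rmult_le_compat_l => //; apply/Rlt_le/Rdiv_lt_0_compat.
Qed.

End SupportExtrema.

Lemma Rayleigh_Aratio_sub (T : finType) (S0 F Q : {set T}) (mu : {set T} -> R) :
  is_measure S0 mu -> 0 < mu set0 -> Rayleigh S0 mu -> F \subset S0 -> Q \subset F ->
  mu F <= Aratio S0 mu * mu Q.
Proof.
move=> mu_ge0 mu0 ray FS QF; have QS := subset_trans QF FS.
case: (Rle_lt_or_eq_dec _ _ (mu_ge0 _ FS)) => [muF | <-].
  exact/le_Aratio_mul/(Rayleigh_support_sub mu_ge0 mu0 ray FS muF QF).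
by apply: Rmult_le_pos; [exact/Rlt_le/Aratio_gt0 | exact: mu_ge0].
Qed.

Section Network.
Variables (V : finType) (E : {set {set V}}) (mu : V -> {set {set V}} -> R).
Hypotheses (mu_meas : network_measures E mu) (mu_cm : cavity_monotone_network E mu).
Implicit Types (F G : {set {set V}}) (e : {set V}).

Local Notation gm := (global_mu E mu).
Local Notation Ai i := (Aratio (Einc E i) (mu i)).
Local Notation maxi i := (max_mu (Einc E i) (mu i)).
Local Notation mini i := (min_mu (Einc E i) (mu i)).
Local Notation subE := (fun F : {set {set V}} => F \subset E).
Local Notation cardF := (fun F : {set {set V}} => #|F|).

Lemma local_mu_ge0 i F : 0 <= mu i (F :&: Einc E i).
Proof. exact/mu_meas/subsetIr. Qed.

Lemma global_mu_ge0 F : 0 <= gm F.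
Proof. by apply: prodR_ge0 => i _; exact: local_mu_ge0. Qed.

Lemma global_mu0_gt0 : 0 < gm set0.
Proof. by apply: prodR_gt0 => i _; rewrite set0I; case: (mu_cm i). Qed.

Let gm_ge0 F (_ : F \subset E) := global_mu_ge0 F.

Lemma Zpart_gt0 t : 0 < t -> 0 < Zpart E mu t.
Proof. exact: (power_sum_gt0 (P := subE) cardF gm_ge0 (sub0set E) global_mu0_gt0). Qed.

Lemma energy_ge0 t : 0 < t -> 0 <= energy E mu t.
Proof. exact: (power_mean_ge0 (P := subE) cardF gm_ge0 (sub0set E) global_mu0_gt0). Qed.

Lemma energy_nondecreasing s t : 0 < s -> s <= t -> energy E mu s <= energy E mu t.
Proof. exact: (power_mean_nondecreasing (P := subE) cardF gm_ge0 (sub0set E) global_mu0_gt0). Qed.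

Lemma Mmax_attained : exists2 F : {set {set V}}, F \subset E /\ 0 < gm F & #|F| = Mmax E mu.
Proof. exact: (bigmax_support_attained (P := subE) cardF (sub0set E) global_mu0_gt0). Qed.

Lemma energy_le_Mmax t : 0 < t -> energy E mu t <= INR (Mmax E mu).
Proof.
move=> t_gt0.
apply: (power_mean_le (P := subE) (k := cardF) gm_ge0 (sub0set E) global_mu0_gt0) => // F FE gmF.
apply: (leq_bigmax_cond (P := fun F : {set {set V}} => (F \subset E) && posb (gm F))).
by rewrite FE; apply/posbP.
Qed.

Lemma global_mu_setU1_le e G : gm (e |: G) <= (\big[Rmult/1]_(i in e) Ai i) * gm G.
Proof.
apply: Rle_trans
  (_ : \big[Rmult/1]_(i : V) ((if i \in e then Ai i else 1) * mu i (G :&: Einc E i)) <= _).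
  apply: ler_prodR => i _; split; first exact: local_mu_ge0.
  case: ifP => ie.
    have [mu0 [ray _]] := mu_cm i.
    by apply: (Rayleigh_Aratio_sub (@mu_meas i) mu0 ray (subsetIr _ _)); apply/setSI/subsetU1.
  have -> : (e |: G) :&: Einc E i = G :&: Einc E i.
    by apply/setP => x; rewrite !inE; case: eqP => [-> |] //=; rewrite ie !andbF.
  lra.
by rewrite big_split /= -big_mkcond; apply: Rle_refl.
Qed.

Lemma sum_global_mu_edge_le t e : 0 < t ->
  \big[Rplus/0]_(F : {set {set V}} | (F \subset E) && (e \in F)) (gm F * t ^ #|F|)
  <= t * (\big[Rmult/1]_(i in e) Ai i) * Zpart E mu t.
Proof.
move=> t_gt0; have A_ge0 : 0 <= \big[Rmult/1]_(i in e) Ai i.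
  by apply: prodR_ge0 => i _; apply/Rlt_le/Aratio_gt0; case: (mu_cm i).
rewrite (reindex_onto (fun G : {set {set V}} => e |: G) (fun F : {set {set V}} => F :\ e));
  last by move=> F /andP[_ eF]; exact: setD1K.
rewrite /= /Zpart big_distrr /=; apply: ler_sumR_subset.
- by move=> G /andP[/andP[eGE _] _]; apply: subset_trans eGE; exact: subsetU1.
- move=> G /andP[_ /eqP GE]; have eG : e \notin G by rewrite -GE !inE eqxx.
  rewrite cardsU1 eG add1n /=.
  have tG : 0 <= t ^ #|G| by apply: pow_le; lra.
  have -> : t * \big[Rmult/1]_(i in e) Ai i * (gm G * t ^ #|G|)
    = \big[Rmult/1]_(i in e) Ai i * gm G * (t * t ^ #|G|) by ring.
  exact: Rmult_le_compat_r (Rmult_le_pos _ _ (Rlt_le _ _ t_gt0) tG) (global_mu_setU1_le e G).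
- move=> G _; apply: Rmult_le_pos; first by apply: Rmult_le_pos; lra.
  by apply: Rmult_le_pos; [exact: global_mu_ge0 | apply: pow_le; lra].
Qed.

Lemma energy_numerator_edges t :
  \big[Rplus/0]_(F : {set {set V}} | F \subset E) (INR #|F| * gm F * t ^ #|F|)
  = \big[Rplus/0]_(e in E)
      \big[Rplus/0]_(F : {set {set V}} | (F \subset E) && (e \in F)) (gm F * t ^ #|F|).
Proof.
rewrite (exchange_big_dep (fun F : {set {set V}} => F \subset E)) /=; last by move=> e F _ /andP[].
apply: eq_bigr => F FE; rewrite INR_card Rmult_assoc big_distrl /=.
apply: eq_big => [e | e _]; last by rewrite Rmult_1_l.
by rewrite FE /=; apply/idP/andP => [eF | [] //]; split; first exact: (subsetP FE).
Qed.

Lemma energy_le t : 0 < t ->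
  energy E mu t <= t * \big[Rplus/0]_(f in E) \big[Rmult/1]_(i in f) Ai i.
Proof.
move=> t_gt0; have Z_gt0 := Zpart_gt0 t_gt0.
rewrite /energy energy_numerator_edges -[X in _ <= X](Rmult_div_r (Zpart E mu t)) /Rdiv; last lra.
apply: Rmult_le_compat_r; first exact/Rlt_le/Rinv_0_lt_compat.
rewrite !big_distrr /=; apply: ler_sumR => e _.
by rewrite Rmult_comm; exact: sum_global_mu_edge_le.
Qed.

Lemma prod_min_le_global_mu F : 0 < gm F -> \big[Rmult/1]_(i : V) mini i <= gm F.
Proof.
move=> gmF; apply: ler_prodR => i _; split; first by apply/Rlt_le/min_mu_gt0; case: (mu_cm i).
apply: min_mu_le; first exact: subsetIr.
exact: (prodR_gt0_factor (F := fun i => mu i (F :&: Einc E i))) (local_mu_ge0^~ F) gmF.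
Qed.

Lemma global_mu_le_prod_max F : gm F <= \big[Rmult/1]_(i : V) maxi i.
Proof.
apply: ler_prodR => i _; split; first exact: local_mu_ge0.
have [mu0 _] := mu_cm i.
case: (Rle_lt_or_eq_dec _ _ (local_mu_ge0 i F)) => [muF | <-]; last exact/Rlt_le/max_mu_gt0.
by apply: max_mu_ge => //; exact: subsetIr.
Qed.

Lemma ln_Zpart1_le : ln (Zpart E mu 1) <= INR #|E| * ln 2 + \big[Rplus/0]_(i : V) ln (maxi i).
Proof.
have max_gt0 i : 0 < maxi i by apply: max_mu_gt0; case: (mu_cm i).
rewrite -(ln_prodR (P := predT)) // -ln_pow; last lra.
rewrite -ln_mult; [| apply: pow_lt; lra | exact: prodR_gt0].
apply: ln_le; first exact: Zpart_gt0 Rlt_0_1.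
apply: Rle_trans
  (_ : \big[Rplus/0]_(F : {set {set V}} | F \subset E) \big[Rmult/1]_(i : V) maxi i <= _).
  by apply: ler_sumR => F _; rewrite pow1 Rmult_1_r; exact: global_mu_le_prod_max.
have -> : \big[Rplus/0]_(F : {set {set V}} | F \subset E) \big[Rmult/1]_(i : V) maxi i
    = (\big[Rplus/0]_(F : {set {set V}} | F \subset E) 1) * \big[Rmult/1]_(i : V) maxi i.
  by rewrite big_distrl; apply: eq_bigr => F _ /=; rewrite Rmult_1_l.
rewrite -INR_card (eq_card (B := powerset E)) => [|F]; last by rewrite powersetE.
by rewrite card_powerset INR_expn; apply: Rle_refl.
Qed.

Lemma energy_ge t : 1 < t ->
  energy E mu t >= INR (Mmax E mu) - / ln t *
    (INR #|E| * ln 2 + \big[Rplus/0]_(i : V) ln (Ai i)).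
Proof.
move=> t_gt1; have t_gt0 : 0 < t by lra.
have lnt : 0 < ln t by rewrite -ln_1; apply: ln_increasing; lra.
have [F [FE gmF] <-] := Mmax_attained.
have tilt := ln_power_sum_le (P := subE) cardF gm_ge0 (sub0set E) global_mu0_gt0 t_gt0.
have single := ln_power_sum_ge cardF gm_ge0 FE gmF t_gt0.
have mins : \big[Rplus/0]_(i : V) ln (mini i) <= ln (gm F).
  rewrite -ln_prodR; last by move=> i _; apply: min_mu_gt0; case: (mu_cm i).
  by apply: ln_le; [apply: prodR_gt0 => i _; apply: min_mu_gt0; case: (mu_cm i) |
    exact: prod_min_le_global_mu].
have lnA : \big[Rplus/0]_(i : V) ln (Ai i)
    = \big[Rplus/0]_(i : V) ln (maxi i) - \big[Rplus/0]_(i : V) ln (mini i).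
  by rewrite -sumR_sub; apply: eq_bigr => i _; apply: ln_Aratio; case: (mu_cm i).
change (ln (Zpart E mu t) - ln t * energy E mu t <= ln (Zpart E mu 1)) in tilt.
change (ln (gm F) + INR #|F| * ln t <= ln (Zpart E mu t)) in single.
have Z1 := ln_Zpart1_le; rewrite lnA; apply: Rle_ge; apply: (Rmult_le_reg_l (ln t)) => //.
rewrite Rmult_minus_distr_l -Rmult_assoc Rinv_r; lra.
Qed.

End Network.

Unset Implicit Arguments.

Theorem mainTheorem8 (V : finType) (E : {set {set V}})
  (mu : V -> {set {set V}} -> R)
  (hG : simple_graph E)
  (hmeas : network_measures E mu)
  (hcm : cavity_monotone_network E mu) :
  (forall s t, 0 < s -> s <= t -> energy E mu s <= energy E mu t) /\
  (forall eps, 0 < eps -> exists d, 0 < d /\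
     forall t, 0 < t -> t < d -> Rabs (energy E mu t) < eps) /\
  (forall eps, 0 < eps -> exists T0,
     forall t, T0 < t -> Rabs (energy E mu t - INR (Mmax E mu)) < eps) /\
  (forall t, 0 < t ->
     energy E mu t <= t * \big[Rplus/0]_(f in E) \big[Rmult/1]_(i in f) Aratio (Einc E i) (mu i)) /\
  (forall t, 1 < t ->
     energy E mu t >= INR (Mmax E mu) - / ln t *
       (INR #|E| * ln 2 + \big[Rplus/0]_(i : V) ln (Aratio (Einc E i) (mu i)))).
Proof.
have upper := energy_le hmeas hcm; have lower := energy_ge hmeas hcm.
split; first exact: energy_nondecreasing hmeas hcm.
split.
  by apply: lim0_of_linear_bound => t t_gt0; split; [exact: energy_ge0 | exact: upper].
split; last by split.
apply: lim_of_log_bound => t t_gt1; split; first exact/Rge_le/lower.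
by apply: (energy_le_Mmax hmeas hcm); lra.
Qed.
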